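(* Let $\gamma:\mathbb{S}^3\to\mathrm{SO}(3)$ be the standard map from unit quaternions $\mathbf{q}=(q_0,q_1,q_2,q_3)$ to rotation matrices, $$\gamma(\mathbf{q})=\begin{pmatrix}1-2q_2^2-2q_3^2 & 2q_1q_2-2q_0q_3 & 2q_1q_3+2q_0q_2\\ 2q_1q_2+2q_0q_3 & 1-2q_1^2-2q_3^2 & 2q_2q_3-2q_0q_1\\ 2q_1q_3-2q_0q_2 & 2q_2q_3+2q_0q_1 & 1-2q_1^2-2q_2^2\end{pmatrix}.$$ If $\mathbf{R}\in\mathrm{SO}(3)$ follows the Rotation Laplace distribution $\mathcal{RL}(\mathbf{A})$ for some $\mathbf{A}\in\mathbb{R}^{3\times3}$, then $\mathbf{q}=\gamma^{-1}(\mathbf{R})\in\mathbb{S}^3$ follows a Quaternion Laplace distribution $\mathcal{QL}(\mathbf{M},\mathbf{Z})$ for some $\mathbf{M}\in\mathrm{O}(4)$ and some $\mathbf{Z}=\operatorname{diag}(0,z_1,z_2,z_3)$.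
   Context: Rotation Laplace distribution $\mathcal{RL}(\mathbf{A})$: for $\mathbf{A}\in\mathbb{R}^{3\times3}$ with proper SVD $\mathbf{A}=\mathbf{U}\mathbf{S}\mathbf{V}^T$, density with respect to the Haar measure on $\mathrm{SO}(3)$ normalized to total mass $1$ given by $p(\mathbf{R};\mathbf{A})=\frac{1}{F(\mathbf{A})}\exp(-\sqrt{\operatorname{tr}(\mathbf{S}-\mathbf{A}^T\mathbf{R})})/\sqrt{\operatorname{tr}(\mathbf{S}-\mathbf{A}^T\mathbf{R})}$. Proper SVD: from an ordinary SVD $\mathbf{A}=\mathbf{U}'\operatorname{diag}(s_1',s_2',s_3')(\mathbf{V}')^T$, set $\mathbf{U}=\mathbf{U}'\operatorname{diag}(1,1,\det\mathbf{U}')$, $\mathbf{V}=\mathbf{V}'\operatorname{diag}(1,1,\det\mathbf{V}')$, $\mathbf{S}=\operatorname{diag}(s_1',s_2',\det(\mathbf{U}'\mathbf{V}')s_3')$. Quaternion Laplace distribution $\mathcal{QL}(\mathbf{M},\mathbf{Z})$ with $\mathbf{M}\in\mathrm{O}(4)$, $\mathbf{Z}=\operatorname{diag}(0,z_1,z_2,z_3)$: density on $\mathbb{S}^3$ (w.r.t. surface measure) proportional to $\exp(-\sqrt{-\mathbf{q}^T\mathbf{M}\mathbf{Z}\mathbf{M}^T\mathbf{q}})/\sqrt{-\mathbf{q}^T\mathbf{M}\mathbf{Z}\mathbf{M}^T\mathbf{q}}$. Since $\gamma(\mathbf{q})=\gamma(-\mathbf{q})$, $\gamma^{-1}(\mathbf{R})$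 denotes a preimage quaternion (the distributions involved are antipodally symmetric). *)

From HB Require Import structures.
From mathcomp Require Import all_boot all_order all_algebra.
From mathcomp Require Import all_classical all_reals all_analysis.
Unset Printing Implicit Defensive.
Import Order.TTheory GRing.Theory Num.Theory.
Local Open Scope ring_scope.
Local Open Scope classical_set_scope.

Definition Mat3 (R : realType) :=
  g_sigma_algebraType (open : set_system 'M[R^o]_(3,3)).
Definition Vec4 (R : realType) :=
  g_sigma_algebraType (open : set_system 'cV[R^o]_4).

Definition SO3 (R : realType) : set (Mat3 R) :=
  [set X | X^T *m X = 1%:M /\ \det X = 1].
Definition orthogonal4 {R : realType} (M : 'M[R]_4) : Prop := M^T *m M = 1%:M.
Definition S3 (R : realType) : set (Vec4 R) :=
  [set q | \sum_(i < 4) q i 0 ^+ 2 = 1].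

Definition qc {R : realType} (q : 'cV[R]_4) (k : nat) : R := q (inord k) 0.

Definition gamma {R : realType} (q : 'cV[R]_4) : 'M[R]_(3,3) :=
  let q0 := qc q 0 in let q1 := qc q 1 in
  let q2 := qc q 2 in let q3 := qc q 3 in
  \matrix_(i < 3, j < 3)
   match val i, val j with
   | 0, 0 => 1 - 2 * q2 ^+ 2 - 2 * q3 ^+ 2
   | 0, 1 => 2 * q1 * q2 - 2 * q0 * q3
   | 0, _ => 2 * q1 * q3 + 2 * q0 * q2
   | 1, 0 => 2 * q1 * q2 + 2 * q0 * q3
   | 1, 1 => 1 - 2 * q1 ^+ 2 - 2 * q3 ^+ 2
   | 1, _ => 2 * q2 * q3 - 2 * q0 * q1
   | _, 0 => 2 * q1 * q3 - 2 * q0 * q2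
   | _, 1 => 2 * q2 * q3 + 2 * q0 * q1
   | _, _ => 1 - 2 * q1 ^+ 2 - 2 * q2 ^+ 2
   end.

Definition is_svd {R : realType} (A U' V' : 'M[R]_3) (s : 'rV[R]_3) : Prop :=
  U'^T *m U' = 1%:M /\ V'^T *m V' = 1%:M /\
  s 0 (inord 0) >= s 0 (inord 1) /\ s 0 (inord 1) >= s 0 (inord 2) /\
  s 0 (inord 2) >= 0 /\
  A = U' *m diag_mx s *m V'^T.

(* The diagonal matrix S of the proper SVD built from an ordinary SVD:
   S = diag(s1', s2', det(U'V') s3'). *)
Definition proper_S {R : realType} (U' V' : 'M[R]_3) (s : 'rV[R]_3) : 'M[R]_3 :=
  diag_mx (\row_(i < 3) (if val i == 2%N then \det (U' *m V') * s 0 i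
                         else s 0 i)).

Definition lap_kernel {R : realType} (x : R) : R :=
  expR (- Num.sqrt x) / Num.sqrt x.

(* Unnormalized RL(A) density (w.r.t. Haar measure) at a rotation X. *)
Definition RL_dens {R : realType} (A S : 'M[R]_3) (X : 'M[R]_3) : R :=
  lap_kernel (\tr (S - A^T *m X)).

(* Unnormalized QL(M,Z) density (w.r.t. surface measure) at q. *)
Definition QL_dens {R : realType} (M Z : 'M[R]_4) (q : 'cV[R]_4) : R :=
  lap_kernel (- (q^T *m M *m Z *m M^T *m q) 0 0).

Definition diagZ {R : realType} (z1 z2 z3 : R) : 'M[R]_4 :=
  diag_mx (\row_(i < 4) match val i with
                        | 0 => 0 | 1 => z1 | 2 => z2 | _ => z3 end).

(* Normalized Haar measure on SO(3): a Borel probability measure on the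
   3x3 matrices, concentrated on SO(3), invariant under left multiplication
   by rotations (unique by uniqueness of Haar measure). *)
Definition haar_SO3 {R : realType} (nu : {measure set (Mat3 R) -> \bar R}) :=
  nu [set: Mat3 R] = 1%E /\ nu (~` SO3 R) = 0%E /\
  forall Q : 'M[R]_3, SO3 R Q ->
    forall B : set (Mat3 R), measurable B ->
      nu ((fun X : Mat3 R => (Q *m X : Mat3 R)) @^-1` B) = nu B.

(* Normalized surface measure on S^3: a Borel probability measure on R^4
   concentrated on S^3 and invariant under O(4) (unique). *)
Definition surface_S3 {R : realType} (sg : {measure set (Vec4 R) -> \bar R}) :=
  sg [set: Vec4 R] = 1%E /\ sg (~` S3 R) = 0%E /\
  forall Q : 'M[R]_4, orthogonal4 Q ->
    forall B : set (Vec4 R), measurable B ->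
      sg ((fun q : Vec4 R => (Q *m q : Vec4 R)) @^-1` B) = sg B.

(* gamma is a group morphism from unit quaternions onto SO(3)
   (gammaM, gamma_surj), and quaternion multiplications are orthogonal maps
   of R^4.  Hence the image under gamma of the surface measure is the Haar
   measure: integrating 1_B(gamma(p) X) over p and X in both orders gives
   nu(B) by left invariance of nu and sg(gamma^-1 B) by right multiplication
   invariance of sg, so no uniqueness theorem for Haar measure is needed.
   Next, with the proper SVD A = U S V^T and U = gamma(u), V = gamma(v),
     tr(S - A^T gamma(q)) = tr(S - S gamma(w)),   w = u^* q v,
   and the diagonal of gamma(w) turns this into the quadratic form
   -w^T Z w with Z = diag(0, -2(s2+s3), -2(s1+s3), -2(s1+s2)) <= 0, where
   w = M^T q for the orthogonal matrix M^T : q |-> u^* q v.  So the RL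
   density at gamma(q) is the QL density at q, and the change of variables
   identifies the two distributions together with their normalising
   constants. *)
From HB Require Import structures.
From mathcomp Require Import all_boot all_order all_algebra.
From mathcomp Require Import all_classical all_reals all_analysis.
From mathcomp Require Import ring lra measurable_realfun.
Set Implicit Arguments.
Unset Strict Implicit.
Unset Printing Implicit Defensive.
Import Order.TTheory GRing.Theory Num.Theory.
Local Open Scope ring_scope.

Section SmallMatrices.

Lemma sum3 (V : nmodType) (F : 'I_3 -> V) :
  \sum_(i < 3) F i = F (inord 0) + F (inord 1) + F (inord 2).
Proof.
rewrite !big_ord_recr big_ord0 /= add0r.
by congr (_ + _ + _); congr F; apply: val_inj; rewrite /= inordK.
Qed.

Lemma sum4 (V : nmodType) (F : 'I_4 -> V) :
  \sum_(i < 4) F i = F (inord 0) + F (inord 1) + F (inord 2) + F (inord 3).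
Proof.
rewrite !big_ord_recr big_ord0 /= add0r.
by congr (_ + _ + _ + _); congr F; apply: val_inj; rewrite /= inordK.
Qed.

Variable T : pzRingType.

Lemma mulmx3E m n (A : 'M[T]_(m, 3)) (B : 'M[T]_(3, n)) i j : (A *m B) i j =
  A i (inord 0) * B (inord 0) j + A i (inord 1) * B (inord 1) j
  + A i (inord 2) * B (inord 2) j.
Proof. by rewrite mxE sum3. Qed.

Lemma mulmx4E m n (A : 'M[T]_(m, 4)) (B : 'M[T]_(4, n)) i j : (A *m B) i j =
  A i (inord 0) * B (inord 0) j + A i (inord 1) * B (inord 1) j
  + A i (inord 2) * B (inord 2) j + A i (inord 3) * B (inord 3) j.
Proof. by rewrite mxE sum4. Qed.

Lemma mxtrace3E (A : 'M[T]_3) :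
  \tr A = A (inord 0) (inord 0) + A (inord 1) (inord 1) + A (inord 2) (inord 2).
Proof. exact: sum3. Qed.

Lemma matrix_inordP m n (A B : 'M[T]_(m.+1, n.+1)) :
  (forall i j, (i <= m)%N -> (j <= n)%N -> A (inord i) (inord j) = B (inord i) (inord j)) ->
  A = B.
Proof.
by move=> AB; apply/matrixP => i j; have := AB i j (ltn_ord i) (ltn_ord j); rewrite !inord_val.
Qed.

Lemma diag_mx_inordE n (d : 'rV[T]_n.+1) i j : (i <= n)%N -> (j <= n)%N ->
  diag_mx d (inord i) (inord j) = if i == j then d 0 (inord i) else 0.
Proof.
by move=> ? ?; rewrite mxE -val_eqE /= !inordK //; case: eqP => _; rewrite ?mulr1n ?mulr0n.
Qed.

Lemma id_mx_inordE n i j : (i <= n)%N -> (j <= n)%N ->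
  (1%:M : 'M[T]_n.+1) (inord i) (inord j) = if i == j then 1 else 0.
Proof.
by move=> ? ?; rewrite mxE -val_eqE /= !inordK //; case: eqP.
Qed.

End SmallMatrices.

Lemma det_mx33 (T : comPzRingType) (A : 'M[T]_3) : \det A =
  A (inord 0) (inord 0) * A (inord 1) (inord 1) * A (inord 2) (inord 2)
  + A (inord 0) (inord 1) * A (inord 1) (inord 2) * A (inord 2) (inord 0)
  + A (inord 0) (inord 2) * A (inord 1) (inord 0) * A (inord 2) (inord 1)
  - A (inord 0) (inord 2) * A (inord 1) (inord 1) * A (inord 2) (inord 0)
  - A (inord 0) (inord 1) * A (inord 1) (inord 0) * A (inord 2) (inord 2)
  - A (inord 0) (inord 0) * A (inord 1) (inord 2) * A (inord 2) (inord 1).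
Proof.
have {1}-> : A = \matrix_(i < 3, j < 3) A (inord i) (inord j).
  by apply/matrixP => i j; rewrite mxE !inord_val.
rewrite (expand_det_row _ ord0) !big_ord_recr big_ord0 /= add0r.
rewrite /cofactor !(expand_det_row _ ord0) !big_ord_recr big_ord0 /= !add0r.
rewrite /cofactor !det_mx11 !mxE /= !big_ord0 !add0r /bump /=.
ring.
Qed.

Lemma orthogonal_det_sqr (T : comPzRingType) n (W : 'M[T]_n) :
  W^T *m W = 1%:M -> \det W ^+ 2 = 1.
Proof. by move=> WW; rewrite expr2 -{1}det_tr -det_mulmx WW det1. Qed.

Section Quaternions.
Context {R : realType}.
Implicit Types (a b c d e f g h : R) (p q r : 'cV[R]_4).

Definition quat a b c d : 'cV[R]_4 :=
  \col_(i < 4) match val i with 0 => a | 1 => b | 2 => c | _ => d end.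

Lemma qc_quat0 a b c d : qc (quat a b c d) 0 = a.
Proof. by rewrite /qc mxE /= inordK. Qed.
Lemma qc_quat1 a b c d : qc (quat a b c d) 1 = b.
Proof. by rewrite /qc mxE /= inordK. Qed.
Lemma qc_quat2 a b c d : qc (quat a b c d) 2 = c.
Proof. by rewrite /qc mxE /= inordK. Qed.
Lemma qc_quat3 a b c d : qc (quat a b c d) 3 = d.
Proof. by rewrite /qc mxE /= inordK. Qed.
Definition qc_quat := (qc_quat0, qc_quat1, qc_quat2, qc_quat3).

Lemma quat_qc q : q = quat (qc q 0) (qc q 1) (qc q 2) (qc q 3).
Proof.
apply/matrixP => i j; rewrite !mxE (ord1 j) /qc.
by case: i => -[|[|[|[|i]]]] Hi //=; congr (q _ _); apply: val_inj; rewrite /= inordK.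
Qed.

(* [S3 R q] unfolds to [qnorm2 q = 1]. *)
Definition qnorm2 q := \sum_(i < 4) q i 0 ^+ 2.

Lemma qnorm2_quat a b c d : qnorm2 (quat a b c d) = a^+2 + b^+2 + c^+2 + d^+2.
Proof. by rewrite /qnorm2 sum4 !mxE /= !inordK. Qed.

Definition qmul p q : 'cV[R]_4 :=
  let a := qc p 0 in let b := qc p 1 in let c := qc p 2 in let d := qc p 3 in
  let e := qc q 0 in let f := qc q 1 in let g := qc q 2 in let h := qc q 3 in
  quat (a*e - b*f - c*g - d*h) (a*f + b*e + c*h - d*g)
       (a*g - b*h + c*e + d*f) (a*h + b*g - c*f + d*e).

Definition qconj p : 'cV[R]_4 := quat (qc p 0) (- qc p 1) (- qc p 2) (- qc p 3).

Lemma qmul_quat a b c d e f g h : qmul (quat a b c d) (quat e f g h) =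
  quat (a*e - b*f - c*g - d*h) (a*f + b*e + c*h - d*g)
       (a*g - b*h + c*e + d*f) (a*h + b*g - c*f + d*e).
Proof. by rewrite /qmul !qc_quat. Qed.

Lemma qconj_quat a b c d : qconj (quat a b c d) = quat a (-b) (-c) (-d).
Proof. by rewrite /qconj !qc_quat. Qed.

Lemma qnorm2M p q : qnorm2 (qmul p q) = qnorm2 p * qnorm2 q.
Proof. by rewrite (quat_qc p) (quat_qc q) qmul_quat !qnorm2_quat; ring. Qed.

Lemma qnorm2_qconj p : qnorm2 (qconj p) = qnorm2 p.
Proof. by rewrite (quat_qc p) qconj_quat !qnorm2_quat; ring. Qed.

Definition qmull_mx l : 'M[R]_4 :=
  let e := qc l 0 in let f := qc l 1 in let g := qc l 2 in let h := qc l 3 in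
  \matrix_(i < 4, j < 4) match val i, val j with
  | 0,0 => e | 0,1 => -f | 0,2 => -g | 0,_ => -h
  | 1,0 => f | 1,1 => e | 1,2 => -h | 1,_ => g
  | 2,0 => g | 2,1 => h | 2,2 => e | 2,_ => -f
  | _,0 => h | _,1 => -g | _,2 => f | _,_ => e end.

Definition qmulr_mx r : 'M[R]_4 :=
  let e := qc r 0 in let f := qc r 1 in let g := qc r 2 in let h := qc r 3 in
  \matrix_(i < 4, j < 4) match val i, val j with
  | 0,0 => e | 0,1 => -f | 0,2 => -g | 0,_ => -h
  | 1,0 => f | 1,1 => e | 1,2 => h | 1,_ => -g
  | 2,0 => g | 2,1 => -h | 2,2 => e | 2,_ => f
  | _,0 => h | _,1 => g | _,2 => -f | _,_ => e end.

Lemma mul_qmull_mx l q : qmull_mx l *m q = qmul l q.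
Proof.
rewrite [in RHS](quat_qc l) [in RHS](quat_qc q) qmul_quat.
apply/matrixP => i j; rewrite mulmx4E !mxE /= !inordK // (ord1 j).
by case: i => -[|[|[|[|i]]]] Hi //=; rewrite /qc; ring.
Qed.

Lemma mul_qmulr_mx r p : qmulr_mx r *m p = qmul p r.
Proof.
rewrite [in RHS](quat_qc p) [in RHS](quat_qc r) qmul_quat.
apply/matrixP => i j; rewrite mulmx4E !mxE /= !inordK // (ord1 j).
by case: i => -[|[|[|[|i]]]] Hi //=; rewrite /qc; ring.
Qed.

Lemma qmull_mx_tr_mul l : (qmull_mx l)^T *m qmull_mx l = qnorm2 l *: 1%:M.
Proof.
rewrite {3}(quat_qc l) qnorm2_quat; apply/matrixP => i j.
rewrite mulmx4E !mxE /= !inordK //.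
by case: i => -[|[|[|[|i]]]] Hi //=; case: j => -[|[|[|[|j]]]] Hj //=; ring.
Qed.

Lemma qmulr_mx_tr_mul r : (qmulr_mx r)^T *m qmulr_mx r = qnorm2 r *: 1%:M.
Proof.
rewrite {3}(quat_qc r) qnorm2_quat; apply/matrixP => i j.
rewrite mulmx4E !mxE /= !inordK //.
by case: i => -[|[|[|[|i]]]] Hi //=; case: j => -[|[|[|[|j]]]] Hj //=; ring.
Qed.

End Quaternions.

Section QuaternionRotation.
Context {R : realType}.
Implicit Types (a b c d e f g h : R) (p q : 'cV[R]_4).

(* gamma of a unit quaternion, with each constant 1 replaced by the squared
   norm so that it becomes a homogeneous quadratic form in the coordinates. *)
Definition quat_rotmx a b c d : 'M[R]_3 :=
  \matrix_(i < 3, j < 3)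
   match val i, val j with
   | 0, 0 => a^+2 + b^+2 - c^+2 - d^+2
   | 0, 1 => 2 * b * c - 2 * a * d
   | 0, _ => 2 * b * d + 2 * a * c
   | 1, 0 => 2 * b * c + 2 * a * d
   | 1, 1 => a^+2 - b^+2 + c^+2 - d^+2
   | 1, _ => 2 * c * d - 2 * a * b
   | _, 0 => 2 * b * d - 2 * a * c
   | _, 1 => 2 * c * d + 2 * a * b
   | _, _ => a^+2 - b^+2 - c^+2 + d^+2
   end.

Lemma gamma_quat a b c d : a^+2 + b^+2 + c^+2 + d^+2 = 1 ->
  gamma (quat a b c d) = quat_rotmx a b c d.
Proof.
move=> n1; apply/matrixP => i j; rewrite /gamma !mxE !qc_quat.
by case: i => -[|[|[|i]]] Hi //=; case: j => -[|[|[|j]]] Hj //=; lra.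
Qed.

Lemma quat_rotmxM a b c d e f g h :
  quat_rotmx a b c d *m quat_rotmx e f g h =
  quat_rotmx (a*e - b*f - c*g - d*h) (a*f + b*e + c*h - d*g)
             (a*g - b*h + c*e + d*f) (a*h + b*g - c*f + d*e).
Proof.
apply/matrixP => i j; rewrite mulmx3E !mxE /= !inordK //.
by case: i => -[|[|[|i]]] Hi //=; case: j => -[|[|[|j]]] Hj //=; ring.
Qed.

Lemma tr_quat_rotmx a b c d : (quat_rotmx a b c d)^T = quat_rotmx a (-b) (-c) (-d).
Proof.
apply/matrixP => i j; rewrite !mxE.
by case: i => -[|[|[|i]]] Hi //=; case: j => -[|[|[|j]]] Hj //=; ring.
Qed.

Lemma det_quat_rotmx a b c d :
  \det (quat_rotmx a b c d) = (a^+2 + b^+2 + c^+2 + d^+2)^+3.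
Proof. by rewrite det_mx33 !mxE /= !inordK //; ring. Qed.

Lemma gammaM p q : qnorm2 p = 1 -> qnorm2 q = 1 ->
  gamma (qmul p q) = gamma p *m gamma q.
Proof.
move=> p1 q1; have pq1 : qnorm2 (qmul p q) = 1 by rewrite qnorm2M p1 q1 mulr1.
move: p1 q1 pq1; rewrite (quat_qc p) (quat_qc q) qmul_quat !qnorm2_quat => p1 q1 pq1.
by rewrite !gamma_quat // quat_rotmxM.
Qed.

Lemma gamma_qconj p : qnorm2 p = 1 -> gamma (qconj p) = (gamma p)^T.
Proof.
move=> p1; have p1' : qnorm2 (qconj p) = 1 by rewrite qnorm2_qconj.
move: p1 p1'; rewrite (quat_qc p) qconj_quat !qnorm2_quat => p1 p1'.
by rewrite !gamma_quat // tr_quat_rotmx.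
Qed.

Lemma quat_rotmx_tr_mul a b c d : (quat_rotmx a b c d)^T *m quat_rotmx a b c d =
  (a^+2 + b^+2 + c^+2 + d^+2)^+2 *: 1%:M.
Proof.
apply/matrixP => i j; rewrite mulmx3E !mxE /= !inordK //.
by case: i => -[|[|[|i]]] Hi //=; case: j => -[|[|[|j]]] Hj //=; ring.
Qed.

Lemma gamma_tr_mul q : qnorm2 q = 1 -> (gamma q)^T *m gamma q = 1%:M.
Proof.
rewrite (quat_qc q) qnorm2_quat => q1.
by rewrite gamma_quat // quat_rotmx_tr_mul q1 expr1n scale1r.
Qed.

Lemma det_gamma q : qnorm2 q = 1 -> \det (gamma q) = 1.
Proof.
by rewrite (quat_qc q) qnorm2_quat => q1; rewrite gamma_quat // det_quat_rotmx q1 expr1n.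
Qed.

Lemma gamma_SO3 q : qnorm2 q = 1 -> SO3 R (gamma q).
Proof. by move=> q1; split; [exact: gamma_tr_mul | exact: det_gamma]. Qed.

Lemma gamma_inordE q i j : (i < 3)%N -> (j < 3)%N ->
  gamma q (inord i) (inord j) =
   match i, j with
   | 0, 0 => 1 - 2 * qc q 2 ^+ 2 - 2 * qc q 3 ^+ 2
   | 0, 1 => 2 * qc q 1 * qc q 2 - 2 * qc q 0 * qc q 3
   | 0, _ => 2 * qc q 1 * qc q 3 + 2 * qc q 0 * qc q 2
   | 1, 0 => 2 * qc q 1 * qc q 2 + 2 * qc q 0 * qc q 3
   | 1, 1 => 1 - 2 * qc q 1 ^+ 2 - 2 * qc q 3 ^+ 2
   | 1, _ => 2 * qc q 2 * qc q 3 - 2 * qc q 0 * qc q 1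
   | _, 0 => 2 * qc q 1 * qc q 3 - 2 * qc q 0 * qc q 2
   | _, 1 => 2 * qc q 2 * qc q 3 + 2 * qc q 0 * qc q 1
   | _, _ => 1 - 2 * qc q 1 ^+ 2 - 2 * qc q 2 ^+ 2
   end.
Proof. by move=> ? ?; rewrite /gamma mxE /= !inordK. Qed.

End QuaternionRotation.

Section GammaSurjective.
Context {R : realType}.
Implicit Types (x y z c s : R).

Lemma sqr_sum_eq0l x y : x^+2 + y^+2 = 0 -> x = 0.
Proof. by move=> xy0; apply/eqP; rewrite -sqrf_eq0 eq_le sqr_ge0 andbT; nra. Qed.

Lemma half_angle x : -1 < x ->
  Num.sqrt (2 * (1 + x)) != 0 /\ Num.sqrt (2 * (1 + x)) ^+ 2 = 2 * (1 + x).
Proof.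
move=> x1; have pos : 0 < 2 * (1 + x) by lra.
by rewrite sqr_sqrtr ?ltW // gt_eqF ?sqrtr_gt0.
Qed.

Lemma gamma_col0_surj x y z : x^+2 + y^+2 + z^+2 = 1 ->
  exists w, qnorm2 w = 1 /\ gamma w (inord 0) (inord 0) = x /\
    gamma w (inord 1) (inord 0) = y /\ gamma w (inord 2) (inord 0) = z.
Proof.
move=> xyz1; have [x1|x1] := eqVneq x (-1).
  have yz0 : y^+2 + z^+2 = 0 by rewrite x1 in xyz1; lra.
  have y0 := sqr_sum_eq0l yz0; rewrite addrC in yz0; have z0 := sqr_sum_eq0l yz0.
  exists (quat 0 0 1 0); rewrite qnorm2_quat !gamma_inordE // !qc_quat x1 y0 z0.
  by split; [|split; [|split]]; ring.
have [t0 t2] : Num.sqrt (2 * (1 + x)) != 0 /\ Num.sqrt (2 * (1 + x)) ^+ 2 = 2 * (1 + x).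
  by apply: half_angle; rewrite lt_neqAle eq_sym x1 /=; nra.
set t := Num.sqrt _ in t0 t2.
have x1' : 1 + x != 0 by apply: contraNneq x1 => ?; apply/eqP; lra.
exists (quat (t / 2) 0 (- z / t) (y / t)).
rewrite qnorm2_quat !gamma_inordE // !qc_quat !expr_div_n t2.
have -> : y^+2 = 1 - x^+2 - z^+2 by lra.
by split; [|split; [|split]]; field; rewrite ?t0 ?x1'.
Qed.

Definition rotx c s : 'M[R]_3 :=
  \matrix_(i < 3, j < 3) match val i, val j with
    | 0, 0 => 1 | 1, 1 => c | 1, 2 => - s | 2, 1 => s | 2, 2 => c | _, _ => 0 end.

Lemma gamma_rotx c s : c^+2 + s^+2 = 1 ->
  exists w, qnorm2 w = 1 /\ gamma w = rotx c s.
Proof.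
move=> cs1; have [c1|c1] := eqVneq c (-1).
  have s0 : s = 0 by apply: (@sqr_sum_eq0l _ 0); rewrite c1 in cs1; lra.
  exists (quat 0 1 0 0); rewrite qnorm2_quat; split; first by ring.
  apply: matrix_inordP => i j Hi Hj; rewrite gamma_inordE // mxE /= !inordK // !qc_quat c1 s0.
  by case: i Hi => [|[|[|i]]] // _; case: j Hj => [|[|[|j]]] // _; ring.
have [t0 t2] : Num.sqrt (2 * (1 + c)) != 0 /\ Num.sqrt (2 * (1 + c)) ^+ 2 = 2 * (1 + c).
  by apply: half_angle; rewrite lt_neqAle eq_sym c1 /=; nra.
set t := Num.sqrt _ in t0 t2.
have c1' : 1 + c != 0 by apply: contraNneq c1 => ?; apply/eqP; lra.
have s2 : s^+2 = 1 - c^+2 by lra.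
exists (quat (t / 2) (s / t) 0 0); rewrite qnorm2_quat !expr_div_n t2 s2.
split; first by field; rewrite c1'.
apply: matrix_inordP => i j Hi Hj; rewrite gamma_inordE // mxE /= !inordK // !qc_quat.
case: i Hi => [|[|[|i]]] // _; case: j Hj => [|[|[|j]]] // _ /=; try ring;
  rewrite ?expr_div_n ?t2 ?s2; field; by rewrite ?t0 ?c1'.
Qed.

Lemma SO3_fix_e1 (Y : 'M[R]_3) : SO3 R Y ->
  Y (inord 0) (inord 0) = 1 -> Y (inord 1) (inord 0) = 0 -> Y (inord 2) (inord 0) = 0 ->
  exists c s, c^+2 + s^+2 = 1 /\ Y = rotx c s.
Proof.
move=> [YY detY] Y00 Y10 Y20.
have YY' : Y *m Y^T = 1%:M by apply: mulmx1C.
have entry (M N : 'M[R]_3) i j : M = N -> M (inord i) (inord j) = N (inord i) (inord j).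
  by move->.
have row0 := entry _ _ 0 0 YY'; rewrite id_mx_inordE // mulmx3E !mxE Y00 /= in row0.
have Y01 : Y (inord 0) (inord 1) = 0 by apply: (@sqr_sum_eq0l _ (Y (inord 0) (inord 2))); lra.
have Y02 : Y (inord 0) (inord 2) = 0 by apply: (@sqr_sum_eq0l _ (Y (inord 0) (inord 1))); lra.
have col1 := entry _ _ 1 1 YY; rewrite id_mx_inordE // mulmx3E !mxE Y01 /= in col1.
have col12 := entry _ _ 1 2 YY; rewrite id_mx_inordE // mulmx3E !mxE Y01 Y02 /= in col12.
move: detY; rewrite det_mx33 Y00 Y10 Y20 Y01 Y02 => detY.
set c := Y (inord 1) (inord 1) in col1 col12 detY.
set s := Y (inord 2) (inord 1) in col1 col12 detY.
set y12 := Y (inord 1) (inord 2) in col12 detY.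
set y22 := Y (inord 2) (inord 2) in col12 detY.
have cs1 : c^+2 + s^+2 = 1 by lra.
have det1 : c * y22 - s * y12 = 1 by lra.
have orth : c * y12 + s * y22 = 0 by lra.
have y12E : y12 = - s.
  transitivity (c * (c * y12 + s * y22) - s * (c * y22 - s * y12)).
    by rewrite -[LHS]mulr1 -cs1; ring.
  by rewrite orth det1; ring.
have y22E : y22 = c.
  transitivity (s * (c * y12 + s * y22) + c * (c * y22 - s * y12)).
    by rewrite -[LHS]mulr1 -cs1; ring.
  by rewrite orth det1; ring.
exists c, s; split => //; apply: matrix_inordP => i j Hi Hj; rewrite mxE /= !inordK //.
case: i Hi => [|[|[|i]]] // _; case: j Hj => [|[|[|j]]] // _ /=.
all: by rewrite ?Y00 ?Y10 ?Y20 ?Y01 ?Y02 -?/c -?/s -?/y12 -?/y22 ?y12E ?y22E.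
Qed.

Lemma gamma_surj (U : 'M[R]_3) : SO3 R U -> exists u, qnorm2 u = 1 /\ gamma u = U.
Proof.
move=> [UU detU].
have U1 := congr1 (fun M : 'M[R]_3 => M (inord 0) (inord 0)) UU.
rewrite /= id_mx_inordE // mulmx3E !mxE /= in U1.
have [w [w1 [G00 [G10 G20]]]] :
    exists w, qnorm2 w = 1 /\ gamma w (inord 0) (inord 0) = U (inord 0) (inord 0) /\
      gamma w (inord 1) (inord 0) = U (inord 1) (inord 0) /\
      gamma w (inord 2) (inord 0) = U (inord 2) (inord 0).
  by apply: gamma_col0_surj; lra.
(* Y = gamma(w)^T U fixes the first basis vector, so it is a rotation about it. *)
set G := gamma w; set Y := G^T *m U.
have GG : G^T *m G = 1%:M by exact: gamma_tr_mul.
have GG' : G *m G^T = 1%:M by apply: mulmx1C.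
have SO3Y : SO3 R Y.
  split; first by rewrite trmx_mul trmxK mulmxA -(mulmxA U^T) GG' mulmx1.
  by rewrite det_mulmx det_tr det_gamma // detU mulr1.
have Ycol0 i : (i < 3)%N -> Y (inord i) (inord 0) = (1%:M : 'M[R]_3) (inord i) (inord 0).
  by move=> Hi; rewrite -GG /Y /G !mulmx3E -G00 -G10 -G20.
have [c [s [cs1 Yrot]]] : exists c s, c^+2 + s^+2 = 1 /\ Y = rotx c s.
  by apply: SO3_fix_e1 => //; rewrite Ycol0 // id_mx_inordE.
have [w' [w'1 Gw']] := gamma_rotx cs1.
exists (qmul w w'); split; first by rewrite qnorm2M w1 w'1 mulr1.
by rewrite gammaM // Gw' -Yrot /Y mulmxA GG' mul1mx.
Qed.

End GammaSurjective.

Section TraceForm.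
Context {R : realType}.

Definition flip3 (e : R) : 'M[R]_3 := diag_mx (\row_(i < 3) if val i == 2%N then e else 1).

Lemma flip3_tr_mul (e : R) : e ^+ 2 = 1 -> (flip3 e)^T *m flip3 e = 1%:M.
Proof.
move=> e2; rewrite tr_diag_mx mulmx_diag -diag_const_mx; congr diag_mx.
by apply/rowP => i; rewrite !mxE; case: ifP; rewrite ?mulr1 // -expr2.
Qed.

Lemma det_flip3 (e : R) : \det (flip3 e) = e.
Proof. by rewrite det_diag !big_ord_recr big_ord0 /= !mxE /= !mul1r. Qed.

(* Flipping the last column of U' and of V' makes both rotations; the sign
   they absorb is det(U'V') on the last singular value. *)
Lemma proper_svd (A U' V' : 'M[R]_3) s : is_svd A U' V' s ->
  exists U V : 'M[R]_3, [/\ SO3 R U, SO3 R V & A = U *m proper_S U' V' s *m V^T].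
Proof.
move=> [U'U' [V'V' [_ [_ [_ defA]]]]].
have orth_flip (W : 'M[R]_3) : W^T *m W = 1%:M -> SO3 R (W *m flip3 (\det W)).
  move=> WW; split; last by rewrite det_mulmx det_flip3 -expr2 orthogonal_det_sqr.
  by rewrite trmx_mul mulmxA -(mulmxA _ W^T) WW mulmx1 flip3_tr_mul ?orthogonal_det_sqr.
exists (U' *m flip3 (\det U')), (V' *m flip3 (\det V')); split; try exact: orth_flip.
rewrite defA trmx_mul !mulmxA; congr (_ *m _); rewrite -!mulmxA; congr (_ *m _).
rewrite mulmxA tr_diag_mx /proper_S !mulmx_diag; congr diag_mx; apply/rowP => i; rewrite !mxE.
case: ifP => _; rewrite ?mul1r ?mulr1 // det_mulmx.
transitivity (\det U' ^+ 2 * \det V' ^+ 2 * s 0 i); last by ring.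
by rewrite !orthogonal_det_sqr // !mul1r.
Qed.

Definition proper_sv (U' V' : 'M[R]_3) (s : 'rV[R]_3) : 'rV[R]_3 :=
  \row_(i < 3) (if val i == 2%N then \det (U' *m V') * s 0 i else s 0 i).

Lemma proper_SE (U' V' : 'M[R]_3) s : proper_S U' V' s = diag_mx (proper_sv U' V' s).
Proof. by []. Qed.

Lemma proper_sv_pair_sums_ge0 (A U' V' : 'M[R]_3) s : is_svd A U' V' s ->
  let sg k := proper_sv U' V' s 0 (inord k) in
  [/\ 0 <= sg 1%N + sg 2%N, 0 <= sg 0%N + sg 2%N & 0 <= sg 0%N + sg 1%N].
Proof.
move=> [U'U' [V'V' [s01 [s12 [s2 _]]]]] sg.
have e2 : \det (U' *m V') ^+ 2 == 1.
  by rewrite det_mulmx exprMn !orthogonal_det_sqr ?mulr1.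
rewrite /sg !mxE /= !inordK //=.
by move: e2; rewrite sqrf_eq1 => /orP[] /eqP ->; split; lra.
Qed.

Lemma mxtrace_diag_sub_gamma (d : 'rV[R]_3) w :
  let dk k := d 0 (inord k) in
  \tr (diag_mx d - diag_mx d *m gamma w) =
  - (w^T *m diagZ (-2 * (dk 1%N + dk 2%N)) (-2 * (dk 0%N + dk 2%N)) (-2 * (dk 0%N + dk 1%N))
       *m w) 0 0.
Proof.
move=> dk; rewrite /diagZ mul_mx_diag mxE sum4 !mxE /= !inordK //.
rewrite raddfB /= !mxtrace3E !mulmx3E !diag_mx_inordE //= !gamma_inordE // /dk /qc.
ring.
Qed.

Lemma mxtrace_svd_gamma (S : 'M[R]_3) u v q :
  qnorm2 u = 1 -> qnorm2 v = 1 -> qnorm2 q = 1 ->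
  \tr (S - (gamma u *m S *m (gamma v)^T)^T *m gamma q) =
  \tr (S - S^T *m gamma (qmul (qmul (qconj u) q) v)).
Proof.
move=> u1 v1 q1; rewrite !raddfB /=; congr (_ - _).
rewrite !gammaM ?qnorm2M ?qnorm2_qconj ?u1 ?q1 ?v1 ?mulr1 // gamma_qconj //.
by rewrite !trmx_mul trmxK -!mulmxA mxtrace_mulC !mulmxA.
Qed.

Lemma RL_dens_gamma_QL (A U' V' : 'M[R]_3) s : is_svd A U' V' s ->
  exists M z1 z2 z3, [/\ orthogonal4 M, z1 <= 0, z2 <= 0, z3 <= 0 &
    forall q, qnorm2 q = 1 ->
      RL_dens A (proper_S U' V' s) (gamma q) = QL_dens M (diagZ z1 z2 z3) q].
Proof.
move=> svdA; have [U [V [SO3U SO3V ->]]] := proper_svd svdA.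
have [u [u1 <-]] := gamma_surj SO3U; have [v [v1 <-]] := gamma_surj SO3V.
pose sg k := proper_sv U' V' s 0 (inord k).
have [h12 h02 h01] : [/\ 0 <= sg 1%N + sg 2%N, 0 <= sg 0%N + sg 2%N & 0 <= sg 0%N + sg 1%N].
  exact: proper_sv_pair_sums_ge0 svdA.
set N := qmulr_mx v *m qmull_mx (qconj u).
exists N^T, (-2 * (sg 1%N + sg 2%N)), (-2 * (sg 0%N + sg 2%N)), (-2 * (sg 0%N + sg 1%N)).
split; try lra.
  rewrite /orthogonal4 trmxK; apply: mulmx1C.
  rewrite trmx_mul mulmxA -(mulmxA _ _ (qmulr_mx v)) qmulr_mx_tr_mul v1 scale1r mulmx1.
  by rewrite qmull_mx_tr_mul qnorm2_qconj u1 scale1r.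
move=> q q1; rewrite /RL_dens /QL_dens; congr lap_kernel.
rewrite mxtrace_svd_gamma // proper_SE tr_diag_mx mxtrace_diag_sub_gamma.
have Nq : N *m q = qmul (qmul (qconj u) q) v by rewrite -mulmxA mul_qmull_mx mul_qmulr_mx.
by rewrite trmxK -Nq trmx_mul !mulmxA.
Qed.

End TraceForm.

Import numFieldTopology.Exports numFieldNormedType.Exports.
Local Open Scope classical_set_scope.

Definition borel_mx (R : realType) m n :=
  g_sigma_algebraType (open : set_system 'M[R^o]_(m, n)).

Section MatrixMeasurability.
Context {R : realType}.

Lemma measurable_mx_entry m n i j :
  measurable_fun setT (fun X : borel_mx R m n => (X : 'M[R]_(m, n)) i j).
Proof.
apply: (measurability _ (RGenOpens.measurableE R)).
move=> _ [_ [a [b ->]] <-]; rewrite setTI; apply: sub_sigma_algebra.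
have /continuousP : continuous (fun X : 'M[R^o]_(m, n) => X i j) by exact: coord_continuous.
by apply; exact: interval_open.
Qed.

Definition rat_box m n (a b : 'M[rat]_(m, n)) : set 'M[R^o]_(m, n) :=
  [set X | forall i j, ratr (a i j) < X i j < ratr (b i j)].

Lemma open_bigcup_rat_box m n (O : set 'M[R^o]_(m, n)) : open O ->
  O = \bigcup_(ab in [set ab | rat_box ab.1 ab.2 `<=` O]) rat_box ab.1 ab.2.
Proof.
move=> oO; apply/seteqP; split => [X OX|X [ab /= boxO /boxO //]].
have /nbhs_ballP[e e0 ballO] : nbhs X O by exact: open_nbhs_nbhs.
have lo i j : exists q : rat, ratr q \in `](X i j - e), (X i j)[%R.
  by apply: rat_in_itvoo; rewrite ltrBlDr ltrDl.
have hi i j : exists q : rat, ratr q \in `](X i j), (X i j + e)[%R.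
  by apply: rat_in_itvoo; rewrite ltrDl.
pose a := \matrix_(i, j) projT1 (cid (lo i j)).
pose b := \matrix_(i, j) projT1 (cid (hi i j)).
have boxE i j : X i j - e < ratr (a i j) < X i j /\ X i j < ratr (b i j) < X i j + e.
  rewrite !mxE; case: (cid (lo i j)) => qa /=; rewrite in_itv /= => ->.
  by case: (cid (hi i j)) => qb /=; rewrite in_itv /= => ->.
exists (a, b) => /= [Y boxY|i j]; last by have [/andP[_ ->] /andP[-> _]] := boxE i j.
apply: ballO; split => // i j; have [/andP[? ?] /andP[? ?]] := boxE i j.
by have /andP[? ?] := boxY i j; rewrite /ball /= ltr_norml; apply/andP; split; lra.
Qed.

Definition mx_measurable d (T : measurableType d) m n (f : T -> 'M[R]_(m, n)) :=
  forall i j, measurable_fun setT (fun t => f t i j).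

Lemma measurable_fun_mx d (T : measurableType d) m n (f : T -> 'M[R]_(m, n)) :
  mx_measurable f -> measurable_fun setT (f : T -> borel_mx R m n).
Proof.
move=> mf.
apply: (@measurability _ _ T (borel_mx R m n) setT f (open : set_system 'M[R^o]_(m, n)) erefl).
move=> _ [U oU <-]; rewrite setTI (open_bigcup_rat_box oU) preimage_bigcup.
rewrite bigcup_mkcond; apply: countable_bigcupT_measurable; first exact: countableP.
move=> [a b]; case: ifPn => _ //=.
have -> : f @^-1` rat_box a b = \bigcap_(k in [set: 'I_m * 'I_n])
    (setT `&` (fun t => f t k.1 k.2) @^-1` `](ratr (a k.1 k.2)), (ratr (b k.1 k.2))[).
  apply/seteqP; split => [t abt [i j] _|t abt i j].
    by split => //=; rewrite in_itv /=; exact: abt.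
  by have [_ /=] := abt (i, j) I; rewrite in_itv.
apply: fin_bigcap_measurable; first exact: finite_finset.
by move=> [i j] _; apply: mf => //; exact: measurable_itv.
Qed.

End MatrixMeasurability.

Section MatrixMeasurableClosure.
Context {R : realType} d (T : measurableType d).
Implicit Types m n p : nat.

Lemma mx_measurable_id m n : mx_measurable (fun X : borel_mx R m n => X : 'M[R]_(m, n)).
Proof. by move=> i j; exact: measurable_mx_entry. Qed.

Lemma mx_measurable_cst m n (C : 'M[R]_(m, n)) : mx_measurable (fun _ : T => C).
Proof. by move=> i j; exact: measurable_cst. Qed.

Lemma mx_measurable_comp d' (T' : measurableType d') m n
    (f : T' -> 'M[R]_(m, n)) (g : T -> T') :
  mx_measurable f -> measurable_fun setT g -> mx_measurable (fun t => f (g t)).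
Proof. by move=> mf mg i j; exact: measurableT_comp (mf i j) mg. Qed.

Lemma mx_measurableD m n (f g : T -> 'M[R]_(m, n)) :
  mx_measurable f -> mx_measurable g -> mx_measurable (fun t => f t + g t).
Proof.
move=> mf mg i j; under eq_fun do rewrite mxE.
exact: measurable_funD.
Qed.

Lemma mx_measurableN m n (f : T -> 'M[R]_(m, n)) :
  mx_measurable f -> mx_measurable (fun t => - f t).
Proof.
move=> mf i j; under eq_fun do rewrite mxE.
exact: measurable_funN.
Qed.

Lemma mx_measurable_tr m n (f : T -> 'M[R]_(m, n)) :
  mx_measurable f -> mx_measurable (fun t => (f t)^T).
Proof. by move=> mf i j; under eq_fun do rewrite mxE; exact: mf. Qed.

Lemma mx_measurableM m n p (f : T -> 'M[R]_(m, n)) (g : T -> 'M[R]_(n, p)) :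
  mx_measurable f -> mx_measurable g -> mx_measurable (fun t => f t *m g t).
Proof.
move=> mf mg i j; under eq_fun do rewrite mxE.
by apply: measurable_sum => k; exact: measurable_funM.
Qed.

Lemma measurable_mxtrace n (f : T -> 'M[R]_n) :
  mx_measurable f -> measurable_fun setT (fun t => \tr (f t)).
Proof. by move=> mf; apply: measurable_sum => k. Qed.

Lemma measurable_eq_cst (f : T -> R) c :
  measurable_fun setT f -> measurable [set t | f t = c].
Proof. by move=> mf; have := mf measurableT [set c] (measurable_set1 c); rewrite setTI. Qed.

End MatrixMeasurableClosure.

Ltac measurable_poly := repeat first
  [ exact: measurable_cst
  | exact: measurable_mx_entry
  | apply: measurable_funX
  | apply: measurable_funD
  | apply: measurable_funB
  | apply: measurable_funM
  | apply: measurable_funN ].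

Section DensityMeasurability.
Context {R : realType}.

Lemma mx_measurable_gamma : mx_measurable (fun q : borel_mx R 4 1 => gamma q).
Proof.
move=> i j; rewrite -(inord_val i) -(inord_val j).
case: i => -[|[|[|i]]] Hi //=; case: j => -[|[|[|j]]] Hj //=;
  under eq_fun do rewrite gamma_inordE //=; rewrite /qc; measurable_poly.
Qed.

Lemma measurable_gamma : measurable_fun setT (fun q : Vec4 R => gamma q : Mat3 R).
Proof. by apply: measurable_fun_mx; exact: mx_measurable_gamma. Qed.

Lemma measurable_inv : measurable_fun setT (@GRing.inv R).
Proof.
have m0 : measurable [set (0 : R)] by exact: measurable_set1.
rewrite -(setUv [set (0 : R)]); apply/measurable_funU => //; first exact: measurableC.
split; first exact: measurable_fun_set1.
apply: open_continuous_measurable_fun.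
  apply: closed_openC; apply: accessible_closed_set1.
  exact/hausdorff_accessible/Rhausdorff.
by move=> x; rewrite inE /= => x0; apply: inv_continuous; exact/eqP.
Qed.

Lemma measurable_lap_kernel : measurable_fun setT (@lap_kernel R).
Proof.
have msqrt : measurable_fun setT (@Num.sqrt R).
  by apply: continuous_measurable_fun; exact: sqrt_continuous.
apply: measurable_funM.
  apply: measurableT_comp; first exact: measurable_expR.
  exact: measurable_funN.
by apply: measurableT_comp; [exact: measurable_inv | exact: msqrt].
Qed.

Lemma measurable_RL_dens (A S : 'M[R]_3) :
  measurable_fun setT (fun X : Mat3 R => RL_dens A S X).
Proof.
rewrite /RL_dens; apply: measurableT_comp; first exact: measurable_lap_kernel.
apply: measurable_mxtrace; apply: mx_measurableD; first exact: mx_measurable_cst.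
apply: mx_measurableN; apply: mx_measurableM; first exact: mx_measurable_cst.
exact: mx_measurable_id.
Qed.

Lemma measurable_S3 : measurable (S3 R).
Proof.
apply: (@measurable_eq_cst _ _ _ (fun q : Vec4 R => \sum_(i < 4) (q : 'cV[R]_4) i 0 ^+ 2)).
by apply: measurable_sum => k; measurable_poly.
Qed.

Lemma measurable_SO3 : measurable (SO3 R).
Proof.
have -> : SO3 R = (\bigcap_(k in [set: 'I_3 * 'I_3])
     [set X : Mat3 R | ((X : 'M[R]_3)^T *m X) k.1 k.2 = (1%:M : 'M[R]_3) k.1 k.2])
  `&` [set X : Mat3 R | \det (X : 'M[R]_3) = 1].
  apply/seteqP; split => [X [XX detX]|X [XX detX]]; split => //.
    by move=> k _ /=; rewrite XX.
  by apply/matrixP => i j; exact: (XX (i, j) I).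
apply: measurableI.
  apply: fin_bigcap_measurable; first exact: finite_finset.
  move=> [i j] _; apply: measurable_eq_cst.
  by apply: mx_measurableM; [apply: mx_measurable_tr|]; exact: mx_measurable_id.
apply: (@measurable_eq_cst _ _ _ (fun X : Mat3 R => \det (X : 'M[R]_3))).
by under eq_fun do rewrite det_mx33; measurable_poly.
Qed.

End DensityMeasurability.

Section ProbabilityOfMeasure.
Context d (T : measurableType d) (R : realType) (mu : {measure set T -> \bar R}).

(* Fubini-Tonelli needs sigma-finite measures, which probabilities are. *)
Definition probability_of of (mu setT = 1)%E : set T -> \bar R := mu.

Variable mu1 : (mu setT = 1)%E.
HB.instance Definition _ := Measure.on (probability_of mu1).
HB.instance Definition _ := Measure_isProbability.Build _ _ _ (probability_of mu1) mu1.

End ProbabilityOfMeasure.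

Section ConullIntegrals.
Local Open Scope ereal_scope.
Context d (T : measurableType d) (R : realType) (mu : {measure set T -> \bar R}).
Variables (S : set T) (mS : measurable S) (muSC : mu (~` S) = 0).

Lemma integral_eq_on_conull (f g : T -> \bar R) :
  measurable_fun setT f -> (forall x, 0 <= f x) ->
  measurable_fun setT g -> (forall x, 0 <= g x) ->
  (forall x, S x -> f x = g x) -> \int[mu]_x f x = \int[mu]_x g x.
Proof.
move=> mf f0 mg g0 fg; have mSC : measurable (~` S) by exact: measurableC.
rewrite (ge0_negligible_integral _ (N := ~` S)) //.
rewrite [RHS](ge0_negligible_integral _ (N := ~` S)) //.
by apply: eq_integral => x; rewrite inE => -[_ /= /contrapT /fg].
Qed.

Lemma integral_cst_on_conull (f : T -> \bar R) c : mu setT = 1 ->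
  measurable_fun setT f -> (forall x, 0 <= f x) ->
  (forall x, S x -> f x = c) -> \int[mu]_x f x = c.
Proof.
move=> mu1 mf f0 fc; have mSC : measurable (~` S) by exact: measurableC.
rewrite (ge0_negligible_integral _ (N := ~` S)) // setDE setCK setTI.
rewrite (eq_integral (fun _ => c)); last by move=> x; rewrite inE => /fc.
rewrite integral_cst //; suff -> : mu S = 1 by rewrite mule1.
have : mu (S `|` ~` S) = mu S + mu (~` S) by apply: measureU => //; rewrite setICr.
by rewrite setUv mu1 muSC adde0 => <-.
Qed.

End ConullIntegrals.

Section HaarPushforward.
Local Open Scope ereal_scope.
Context {R : realType}.
Variables (nu : {measure set (Mat3 R) -> \bar R}) (sg : {measure set (Vec4 R) -> \bar R}).
Hypotheses (haar_nu : haar_SO3 nu) (surface_sg : surface_S3 sg).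
Variables (B : set (Mat3 R)) (mB : measurable B).

Let k (z : Vec4 R * Mat3 R) : \bar R := (\1_B (gamma z.1 *m z.2 : Mat3 R) : R)%:E.

Let measurable_k : measurable_fun setT k.
Proof.
have mmul : measurable_fun setT (fun z : Vec4 R * Mat3 R => gamma z.1 *m z.2 : Mat3 R).
  apply: (@measurable_fun_mx R _ _ 3 3 (fun z : Vec4 R * Mat3 R => gamma z.1 *m z.2)).
  apply: mx_measurableM.
    exact: (mx_measurable_comp mx_measurable_gamma (@measurable_fst _ _ (Vec4 R) (Mat3 R))).
  apply: (@mx_measurable_comp R _ _ _ _ 3 3 (fun X : borel_mx R 3 3 => X : 'M[R]_3) snd).
    exact: mx_measurable_id.
  exact: measurable_snd.
by apply/measurable_EFinP; apply: measurableT_comp mmul; exact: measurable_indic.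
Qed.

Let k_ge0 z : 0 <= k z.
Proof. by rewrite lee_fin /indic ler0n. Qed.

Let integral_k_over_rotations p : S3 R p -> \int[nu]_X k (p, X) = nu B.
Proof.
move=> p1; have [_ [_ nu_inv]] := haar_nu.
have mL : measurable_fun setT (fun X : Mat3 R => (gamma p *m X : Mat3 R)).
  apply: measurable_fun_mx; apply: mx_measurableM; first exact: mx_measurable_cst.
  exact: mx_measurable_id.
have mpre : measurable ((fun X : Mat3 R => (gamma p *m X : Mat3 R)) @^-1` B).
  by rewrite -[X in measurable X]setTI; exact: mL.
transitivity (\int[nu]_X (\1_((fun X : Mat3 R => (gamma p *m X : Mat3 R)) @^-1` B) X : R)%:E).
  by [].
by rewrite integral_indic // setIT nu_inv //; exact: gamma_SO3.
Qed.

Let phi (q : Vec4 R) : Mat3 R := gamma q.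

(* gamma(p) X = gamma(p r) for X = gamma(r), and p |-> p r is orthogonal *)
Let integral_k_over_quaternions X : SO3 R X -> \int[sg]_p k (p, X) = sg (phi @^-1` B).
Proof.
move=> SO3X; have [_ [sgSC sg_inv]] := surface_sg.
have [r [r1 rX]] := gamma_surj SO3X.
have mpB : measurable (phi @^-1` B) by rewrite -[X in measurable X]setTI; exact: measurable_gamma.
have mRr : measurable_fun setT (fun p : Vec4 R => (qmulr_mx r *m p : Vec4 R)).
  apply: measurable_fun_mx; apply: mx_measurableM; first exact: mx_measurable_cst.
  exact: mx_measurable_id.
have mpre : measurable ((fun p : Vec4 R => (qmulr_mx r *m p : Vec4 R)) @^-1` (phi @^-1` B)).
  by rewrite -[X in measurable X]setTI; exact: mRr measurableT _ mpB.
transitivity (\int[sg]_p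
    (\1_((fun p : Vec4 R => (qmulr_mx r *m p : Vec4 R)) @^-1` (phi @^-1` B)) p : R)%:E).
  apply: (integral_eq_on_conull measurable_S3 sgSC).
  - exact: measurable_fun_pair1 X measurable_k.
  - by move=> p; exact: k_ge0.
  - by apply/measurable_EFinP; exact: measurable_indic.
  - by move=> p; rewrite lee_fin /indic ler0n.
  by move=> p p1; rewrite /k /= -rX -gammaM // -mul_qmulr_mx.
rewrite integral_indic // setIT sg_inv //.
by rewrite /orthogonal4 qmulr_mx_tr_mul r1 scale1r.
Qed.

Lemma haar_pushforward_gamma : nu B = sg (phi @^-1` B).
Proof.
have [nu1 [nuSC _]] := haar_nu; have [sg1 [sgSC _]] := surface_sg.
have inner_nu_ge0 p : 0 <= \int[nu]_X k (p, X) by apply: integral_ge0.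
have inner_sg_ge0 X : 0 <= \int[sg]_p k (p, X) by apply: integral_ge0.
have := fubini_tonelli (m1 := probability_of sg1) (m2 := probability_of nu1) k measurable_k k_ge0.
rewrite (integral_cst_on_conull measurable_S3 sgSC sg1 _ inner_nu_ge0 integral_k_over_rotations).
  rewrite (integral_cst_on_conull measurable_SO3 nuSC nu1 _ inner_sg_ge0 integral_k_over_quaternions) //.
  exact: (measurable_fun_fubini_tonelli_G (m1 := probability_of sg1) k measurable_k k_ge0).
exact: (measurable_fun_fubini_tonelli_F (m2 := probability_of nu1) k measurable_k k_ge0).
Qed.

End HaarPushforward.

Lemma lap_kernel_ge0 (R : realType) (x : R) : 0 <= lap_kernel x.
Proof. by rewrite /lap_kernel divr_ge0 ?expR_ge0 ?sqrtr_ge0. Qed.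

Lemma integral_haar_gamma (R : realType) (nu : {measure set (Mat3 R) -> \bar R})
    (sg : {measure set (Vec4 R) -> \bar R}) (f : Mat3 R -> \bar R) (B : set (Mat3 R)) :
  haar_SO3 nu -> surface_S3 sg -> measurable B ->
  measurable_fun setT f -> (forall X, (0 <= f X)%E) ->
  (\int[nu]_(X in B `&` SO3 R) f X =
   \int[sg]_(q in S3 R `&` (fun q : Vec4 R => gamma q : Mat3 R) @^-1` B) f (gamma q))%E.
Proof.
move=> haar_nu surface_sg mB mf f0.
have [_ [nuSC _]] := haar_nu; have [_ [sgSC _]] := surface_sg.
have mSO3C : measurable (~` SO3 R) by apply: measurableC; exact: measurable_SO3.
have mS3C : measurable (~` S3 R) by apply: measurableC; exact: measurable_S3.
set phi := fun q : Vec4 R => gamma q : Mat3 R.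
have mphi : measurable_fun setT phi by exact: measurable_gamma.
have mpB : measurable (phi @^-1` B) by rewrite -[X in measurable X]setTI; exact: mphi.
transitivity (\int[nu]_(X in B) f X)%E.
  rewrite [RHS](ge0_negligible_integral mSO3C mB (measurable_funTS mf) (fun X _ => f0 X) nuSC).
  by rewrite setDE setCK.
transitivity (\int[sg]_(q in phi @^-1` B) (f \o phi) q)%E.
  rewrite -(ge0_integral_pushforward mphi sg mB (measurable_funTS mf)) //.
  apply: eq_measure_integral => C mC _.
  by rewrite (haar_pushforward_gamma haar_nu surface_sg mC).
have mfphi : measurable_fun (phi @^-1` B) (f \o phi).
  by apply: measurable_funTS; exact: measurableT_comp mf measurable_gamma.
rewrite (ge0_negligible_integral mS3C mpB mfphi (fun q _ => f0 (phi q)) sgSC).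
by rewrite setDE setCK setIC.
Qed.

Unset Implicit Arguments.

Theorem proposition4 (R : realType)
  (nu : {measure set (Mat3 R) -> \bar R})
  (sg : {measure set (Vec4 R) -> \bar R})
  (A U' V' : 'M[R]_3) (s : 'rV[R]_3) :
  haar_SO3 nu -> surface_S3 sg ->
  is_svd A U' V' s ->
  let F := (\int[nu]_(X in SO3 R) (RL_dens A (proper_S U' V' s) X)%:E)%E in
  (0 < F < +oo)%E ->
  exists (M : 'M[R]_4) (z1 z2 z3 : R),
    orthogonal4 M /\ z1 <= 0 /\ z2 <= 0 /\ z3 <= 0 /\
    let G := (\int[sg]_(q in S3 R) (QL_dens M (diagZ z1 z2 z3) q)%:E)%E in
    (0 < G < +oo)%E /\
    forall B : set (Mat3 R), measurable B ->
      ((\int[nu]_(X in B `&` SO3 R) (RL_dens A (proper_S U' V' s) X)%:E)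
         * ((fine F)^-1)%:E)%E =
      ((\int[sg]_(q in S3 R `&` (fun q : Vec4 R => (gamma q : Mat3 R)) @^-1` B)
           (QL_dens M (diagZ z1 z2 z3) q)%:E)
         * ((fine G)^-1)%:E)%E.
Proof.
move=> haar_nu surface_sg svdA F F_fin.
have [M [z1 [z2 [z3 [orthM z1_le0 z2_le0 z3_le0 RL_QL]]]]] := RL_dens_gamma_QL svdA.
exists M, z1, z2, z3; do 4!split => //.
have RL_QL_integral B : measurable B ->
    (\int[nu]_(X in B `&` SO3 R) (RL_dens A (proper_S U' V' s) X)%:E =
     \int[sg]_(q in S3 R `&` (fun q : Vec4 R => gamma q : Mat3 R) @^-1` B)
       (QL_dens M (diagZ z1 z2 z3) q)%:E)%E.
  move=> mB; rewrite (integral_haar_gamma haar_nu surface_sg mB).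
  - by apply: eq_integral => q /[1!inE] -[q1 _]; rewrite RL_QL.
  - by apply/measurable_EFinP; exact: measurable_RL_dens.
  - by move=> X; rewrite lee_fin lap_kernel_ge0.
move=> G; have GF : G = F.
  by have := RL_QL_integral _ measurableT; rewrite setTI preimage_setT setIT /G /F => ->.
by rewrite GF; split => // B mB; rewrite RL_QL_integral.
Qed.
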